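(* Consider an additive noise model on $d$ real random variables with causal DAG $\mathcal{G}$: $x_i=f_i(\mathrm{pa}(x_i))+\epsilon_i$, with twice differentiable $f_i$ and mutually independent noises i.i.d. with smooth positive density $p^\epsilon$, so that $p(\mathbf{x})=\prod_{i=1}^d p^\epsilon(x_i-f_i(\mathrm{pa}(x_i)))$. Let $x_l$ be a leaf of $\mathcal{G}$, let $p(\mathbf{x}_{-l})=\prod_{i\neq l}p^\epsilon(x_i-f_i(\mathrm{pa}(x_i)))$, and let $\Delta_l=(\delta_j)_{j\neq l}$ with $\delta_j=\frac{\partial}{\partial x_j}\log p(\mathbf{x})-\frac{\partial}{\partial x_j}\log p(\mathbf{x}_{-l})$. Then at every point $\mathbf{x}$ where $H_{l,l}(\log p(\mathbf{x}))\neq 0$, for every $j\neq l$, $$\delta_j = H_{l,j}(\log p(\mathbf{x}))\cdot \frac{\frac{\partial}{\partial x_l}\log p(\mathbf{x})}{H_{l,l}(\log p(\mathbf{x}))},$$ i.e. $\Delta_l = H_l(\log p(\mathbf{x}))\cdot \frac{\nabla_{x_l}\log p(\mathbf{x})}{H_{l,l}(\log p(\mathbf{x}))}$ restricted to the coordinates $j\neq l$.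
   Context: $H(\log p(\mathbf{x}))$ is the Hessian of $\log p$ (the Jacobian of the score $\nabla_{\mathbf{x}}\log p(\mathbf{x})$), $H_{i,j}$ its $(i,j)$ entry and $H_l$ its $l$-th row. $\mathrm{pa}(x_i)$ denotes the parents of $x_i$ in $\mathcal{G}$; a leaf is a node with no children. *)

From HB Require Import structures.
From mathcomp Require Import all_boot all_order all_algebra.
From mathcomp Require Import all_classical all_reals all_analysis.
Set Implicit Arguments. Unset Strict Implicit. Unset Printing Implicit Defensive.
Import Order.TTheory GRing.Theory Num.Theory.
Import numFieldNormedType.Exports.
Local Open Scope ring_scope.

(* Points x in R^d are row vectors 'rV[R]_d; coordinate i is x ord0 i. *)

Definition pderiv (R : realType) (d : nat) (j : 'I_d)
  (F : 'rV[R]_d -> R) (x : 'rV[R]_d) : R :=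
  derive F x (delta_mx ord0 j).

Definition edge (d : nat) (pa : 'I_d -> {set 'I_d}) : rel 'I_d :=
  fun a b => a \in pa b.

Definition is_dag (d : nat) (pa : 'I_d -> {set 'I_d}) : Prop :=
  forall a b : 'I_d, edge pa a b -> ~~ connect (edge pa) b a.

Definition is_leaf (d : nat) (pa : 'I_d -> {set 'I_d}) (l : 'I_d) : Prop :=
  forall i : 'I_d, l \notin pa i.

Definition depends_only_on (R : realType) (d : nat) (S : {set 'I_d})
  (f : 'rV[R]_d -> R) : Prop :=
  forall x y : 'rV[R]_d, (forall k, k \in S -> x ord0 k = y ord0 k) -> f x = f y.

Definition twice_differentiable (R : realType) (d : nat)
  (f : 'rV[R]_d -> R) : Prop :=
  (forall x, differentiable f x) /\
  (forall (v : 'rV[R]_d) x, differentiable (fun y => derive f y v) x).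

Definition smooth (R : realType) (g : R -> R) : Prop :=
  forall (n : nat) (t : R), derivable (iter n (@derive1 R R) g) t 1.

Definition anm_density (R : realType) (d : nat) (pe : R -> R)
  (f : 'I_d -> 'rV[R]_d -> R) (x : 'rV[R]_d) : R :=
  \prod_(i < d) pe (x ord0 i - f i x).

Definition anm_density_minus (R : realType) (d : nat) (pe : R -> R)
  (f : 'I_d -> 'rV[R]_d -> R) (l : 'I_d) (x : 'rV[R]_d) : R :=
  \prod_(i < d | i != l) pe (x ord0 i - f i x).

Definition log_density (R : realType) (d : nat) (pe : R -> R)
  (f : 'I_d -> 'rV[R]_d -> R) (x : 'rV[R]_d) : R :=
  ln (anm_density pe f x).

Definition hess_log (R : realType) (d : nat) (pe : R -> R)
  (f : 'I_d -> 'rV[R]_d -> R) (i j : 'I_d) (x : 'rV[R]_d) : R :=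
  pderiv j (pderiv i (log_density pe f)) x.

From HB Require Import structures.
From mathcomp Require Import all_boot all_order all_algebra.
From mathcomp Require Import all_classical all_reals all_analysis.
Import Order.TTheory GRing.Theory Num.Theory.
Import numFieldNormedType.Exports.
Local Open Scope ring_scope.

(* Writing eps_i(x) = x_i - f_i(x) for the noise and G = ln o pe, we have
   log p = sum_i G(eps_i) and log p(x_{-l}) = sum_{i <> l} G(eps_i), so
   delta_j = G'(eps_l) d_j eps_l.  Since l is a leaf, x_l occurs in no f_i,
   hence d_l eps_i is 1 for i = l and 0 otherwise: the l-th score is
   G'(eps_l) and differentiating it once more gives H_{l,k} = G''(eps_l) d_k eps_l.
   In particular H_{l,l} = G''(eps_l), and the identity follows by division. *)

Section DirectionalDerivative.
Context {R : realType} {V : normedModType R}.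

Lemma derive_along_line (F : V -> R) x v :
  'D_v F x = 'D_1 (fun h : R => F (h *: v + x)) 0.
Proof.
rewrite /derive; congr lim; set lhs := fun _ => _; set rhs := fun _ => _.
suff -> : lhs = rhs by [].
by apply: funext => h; rewrite /lhs /rhs /= scale0r add0r addr0 [h%:A]mulr1.
Qed.

Lemma is_derive_comp1 (u : V -> R) (g : R -> R) x v (du dg : R) :
  is_derive x v u du -> is_derive (u x) 1 g dg ->
  is_derive x v (g \o u) (dg * du).
Proof.
move=> [du_ex <-] [dg_ex <-].
pose line h := u (h *: v + x).
have line0 : line 0 = u x by rewrite /line scale0r add0r.
have dline : derivable line 0 1 by move/derivable1P: du_ex.
have dg_line : derivable g (line 0) 1 by rewrite line0; exact: dg_ex.
apply: DeriveDef.
  apply/derivable1P/derivable1_diffP.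
  by apply: (@differentiable_comp _ _ _ _ line g); exact/derivable1_diffP.
rewrite derive_along_line (derive_along_line u) -!derive1E -line0.
exact: (derive1_comp dline dg_line).
Qed.

Lemma is_derive_line_cst (F : V -> R) x v :
  (forall h : R, F (h *: v + x) = F x) -> is_derive x v F 0.
Proof.
move=> Fcst; have line_cst : (fun h : R => F (h *: v + x)) = cst (F x).
  exact: funext.
apply: DeriveDef; first by apply/derivable1P; rewrite line_cst.
by rewrite derive_along_line line_cst derive_cst.
Qed.

Lemma is_derive_big {I : Type} (s : seq I) (P : pred I) (F : I -> V -> R)
    (dF : I -> R) x v :
  (forall i, P i -> is_derive x v (F i) (dF i)) ->
  is_derive x v (fun y => \sum_(i <- s | P i) F i y) (\sum_(i <- s | P i) dF i).
Proof.
move=> dFi; rewrite -fct_sumE.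
by elim/big_ind2 : _ => //; [exact: is_derive_cst | move=> *; exact: is_deriveD].
Qed.

End DirectionalDerivative.

Lemma ln_prod (R : realType) (I : Type) (s : seq I) (P : pred I) (F : I -> R) :
  (forall i, P i -> 0 < F i) ->
  ln (\prod_(i <- s | P i) F i) = \sum_(i <- s | P i) ln (F i).
Proof.
move=> F_gt0; elim: s => [|i s IH]; first by rewrite !big_nil ln1.
rewrite !big_cons; case: ifP => // Pi.
by rewrite lnM ?IH // posrE ?F_gt0 // prodr_gt0.
Qed.

Section Coordinates.
Context {R : realType} {d : nat}.

Lemma is_derive_coord (k : 'I_d) (x v : 'rV[R]_d) :
  is_derive x v (fun y : 'rV[R]_d => y ord0 k) (v ord0 k).
Proof.
pose c (y : 'rV[R]_d) := y ord0 k.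
have c_lin : linear c by move=> a y z; rewrite /c !mxE.
pose cL : {linear 'rV[R]_d -> R} := HB.pack c (GRing.isLinear.Build _ _ _ _ c c_lin).
apply: DeriveDef; first exact/diff_derivable/differentiable_coord.
rewrite deriveE; last exact: differentiable_coord.
by rewrite (diff_lin (f := cL)) //; exact: coord_continuous.
Qed.

Lemma pderiv_notin {S : {set 'I_d}} {F : 'rV[R]_d -> R} (a : 'I_d) x :
  depends_only_on S F -> a \notin S -> pderiv a F x = 0.
Proof.
move=> F_S aS; apply: derive_val; apply: is_derive_line_cst => h.
apply: F_S => k kS; rewrite !mxE eqxx /=.
by case: eqP => [ka | _]; [rewrite -ka kS in aS | rewrite mulr0 add0r].
Qed.

End Coordinates.

Definition anm_noise {R : realType} {d : nat} (f : 'I_d -> 'rV[R]_d -> R)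
  (i : 'I_d) (x : 'rV[R]_d) : R := x ord0 i - f i x.

Section AdditiveNoiseModel.
Context {R : realType} {d : nat} {pa : 'I_d -> {set 'I_d}}
  {f : 'I_d -> 'rV[R]_d -> R} {pe : R -> R} {l : 'I_d}.
Hypothesis f_dep : forall i, depends_only_on (pa i) (f i).
Hypothesis f_diff : forall i x, differentiable (f i) x.
Hypothesis pe_smooth : smooth pe.
Hypothesis pe_gt0 : forall t, 0 < pe t.
Hypothesis l_leaf : is_leaf pa l.

Let G t := ln (pe t).
Let pe_derivable t : derivable pe t 1 := pe_smooth 0 t.
Let pe'_derivable t : derivable (derive1 pe) t 1 := pe_smooth 1 t.

Lemma is_derive_log_noise_density (t : R) : is_derive t 1 G (derive1 pe t / pe t).
Proof.
rewrite mulrC derive1E.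
exact: is_derive_comp1 (derivableP (pe_derivable t)) (is_derive1_ln (pe_gt0 t)).
Qed.

Lemma derivable_log_noise_density' (t : R) : derivable (derive1 G) t 1.
Proof.
have -> : derive1 G = (fun t => (pe t)^-1) * derive1 pe.
  apply: funext => s; rewrite derive1E.
  by have [_ ->] := is_derive_log_noise_density s; rewrite mulrC.
apply: derivableM; last exact: pe'_derivable.
by apply: derivableV; [rewrite gt_eqF | exact: pe_derivable].
Qed.

Lemma is_derive_noise i x v :
  is_derive x v (anm_noise f i) (v ord0 i - 'D_v (f i) x).
Proof.
apply: is_deriveB; first exact: is_derive_coord.
exact/derivableP/diff_derivable.
Qed.

Lemma pderiv_noise_leaf i x : pderiv l (anm_noise f i) x = (i == l)%:R.
Proof.
rewrite /pderiv; have [_ ->] := is_derive_noise i x (delta_mx ord0 l).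
have := pderiv_notin l x (f_dep i) (l_leaf i); rewrite /pderiv => ->.
by rewrite subr0 mxE eqxx eq_sym.
Qed.

Lemma log_density_sum :
  log_density pe f = fun x => \sum_i G (anm_noise f i x).
Proof. by apply: funext => x; rewrite /log_density ln_prod. Qed.

Lemma log_density_minus_sum :
  (fun x => ln (anm_density_minus pe f l x)) =
  fun x => \sum_(i | i != l) G (anm_noise f i x).
Proof. by apply: funext => x; rewrite ln_prod. Qed.

Lemma is_derive_log_noise i x v :
  is_derive x v (fun y => G (anm_noise f i y))
    (derive1 G (anm_noise f i x) * 'D_v (anm_noise f i) x).
Proof.
rewrite derive1E; apply: is_derive_comp1.
- exact/derivableP/ex_derive/is_derive_noise.
- exact/derivableP/ex_derive/is_derive_log_noise_density.
Qed.

Lemma score_difference j x :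
  pderiv j (log_density pe f) x - pderiv j (fun y => ln (anm_density_minus pe f l y)) x
  = derive1 G (anm_noise f l x) * pderiv j (anm_noise f l) x.
Proof.
have d_sum P := is_derive_big (index_enum 'I_d) P _ _ x (delta_mx ord0 j)
  (fun i _ => is_derive_log_noise i x (delta_mx ord0 j)).
rewrite log_density_sum log_density_minus_sum /pderiv.
have [_ ->] := d_sum xpredT; have [_ ->] := d_sum (fun i => i != l).
by rewrite (bigD1 l) //= addrK.
Qed.

Lemma score_leaf : pderiv l (log_density pe f) = fun x => derive1 G (anm_noise f l x).
Proof.
apply: funext => x; rewrite log_density_sum /pderiv.
have [_ ->] := is_derive_big (index_enum 'I_d) xpredT _ _ x (delta_mx ord0 l)
  (fun i _ => is_derive_log_noise i x (delta_mx ord0 l)).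
rewrite (bigD1 l) //= big1 => [|i il]; rewrite -/(pderiv _ _ _) pderiv_noise_leaf.
  by rewrite eqxx mulr1 addr0.
by rewrite (negbTE il) mulr0.
Qed.

Lemma hess_log_leaf k x :
  hess_log pe f l k x = derive1 (derive1 G) (anm_noise f l x) * pderiv k (anm_noise f l) x.
Proof.
rewrite /hess_log score_leaf /pderiv derive1E; apply: derive_val.
apply: is_derive_comp1; first exact/derivableP/ex_derive/is_derive_noise.
exact/derivableP/derivable_log_noise_density'.
Qed.

Lemma hess_log_leaf_leaf x :
  hess_log pe f l l x = derive1 (derive1 G) (anm_noise f l x).
Proof. by rewrite hess_log_leaf pderiv_noise_leaf eqxx mulr1. Qed.

End AdditiveNoiseModel.

Theorem theorem1 (R : realType) (d : nat) (pa : 'I_d -> {set 'I_d})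
  (f : 'I_d -> 'rV[R]_d -> R) (pe : R -> R) (l : 'I_d) :
  is_dag pa ->
  (forall i, depends_only_on (pa i) (f i)) ->
  (forall i, twice_differentiable (f i)) ->
  smooth pe ->
  (forall t, 0 < pe t) ->
  measurable_fun setT pe ->
  (\int[lebesgue_measure]_t (pe t)%:E = 1)%E ->
  is_leaf pa l ->
  forall x : 'rV[R]_d,
    hess_log pe f l l x != 0 ->
    forall j : 'I_d, j != l ->
      pderiv j (log_density pe f) x
        - pderiv j (fun y => ln (anm_density_minus pe f l y)) x
      = hess_log pe f l j x
        * (pderiv l (log_density pe f) x / hess_log pe f l l x).
Proof.
move=> _ f_dep f_twice pe_smooth pe_gt0 _ _ l_leaf x.
have f_diff i : forall y, differentiable (f i) y := (f_twice i).1.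
rewrite (hess_log_leaf_leaf f_dep f_diff pe_smooth pe_gt0 l_leaf) => H_ll j _.
rewrite (hess_log_leaf f_dep f_diff pe_smooth pe_gt0 l_leaf).
rewrite (score_leaf f_dep f_diff pe_smooth pe_gt0 l_leaf).
rewrite (score_difference f_diff pe_smooth pe_gt0).
by rewrite [RHS]mulrAC mulrCA mulfV // mulr1.
Qed.
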